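(* Let $\psi$ be a reduced function with $\delta(\psi)<\sqrt3$. Then either the family $(t_k)$ is finite, or $\psi(t_k)=t_{k-1}-1$ for every sufficiently large $k$.
   Context: $\mathcal{A}$ is an alphabet disjoint from $\mathbb{N}^*=\{1,2,\dots\}$. A function is a map $\psi:\mathbb{N}^*\to\mathbb{N}^*\sqcup\mathcal{A}$ such that for every $n\ge1$ either $\psi(n)\in\mathcal{A}$ or $1\le\psi(n)\le n-1$. Let $(t_k)_{k\ge0}$ be the (finite or infinite) family, in increasing order, of all $n\ge1$ with $\psi(n)\in\mathcal{A}$ or $1\le\psi(n)\le n-2$. $\psi$ is reduced if for every $k\ge1$ such that $t_k$ exists: $\psi(t_k)\ne\psi(t_{k-1})$, and either $\psi(t_k)\in\mathcal{A}$ or $\psi(t_k)<t_{k-1}$. For reduced $\psi$, define $n_1=0$ and for $i\ge1$: $n_{i+1}=2n_i-n_{\psi(i)}$ if $\psi(i)\in\mathbb{N}^*$, $n_{i+1}=2n_i+1$ if $\psi(i)\in\mathcal{A}$; then $\delta(\psi)=\limsup_{i\to\infty}n_{i+1}/n_i$. *)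

From Stdlib Require Import Reals Arith Lia.
From Coquelicot Require Import Coquelicot.
Open Scope R_scope.

(* A "function" psi : N* -> N* ⊔ A is modelled as psi : nat -> A + nat,
   where inl a is a letter of the alphabet and inr m the integer m.
   Only arguments n >= 1 are relevant; psi 0 is ignored. *)
Definition is_function {A : Type} (psi : nat -> A + nat) : Prop :=
  forall n : nat, (1 <= n)%nat ->
    match psi n with
    | inl _ => True
    | inr m => (1 <= m <= n - 1)%nat
    end.

(* membership in the family (t_k): psi(n) in A or 1 <= psi(n) <= n-2 *)
Definition inT {A : Type} (psi : nat -> A + nat) (n : nat) : Prop :=
  (1 <= n)%nat /\
  match psi n with
  | inl _ => True
  | inr m => (1 <= m <= n - 2)%nat
  end.

(* t' and t are consecutive members of the family, i.e. t' = t_(k-1), t = t_k *)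
Definition consec {A : Type} (psi : nat -> A + nat) (t' t : nat) : Prop :=
  inT psi t' /\ inT psi t /\ (t' < t)%nat /\
  (forall u : nat, (t' < u < t)%nat -> ~ inT psi u).

Definition reduced {A : Type} (psi : nat -> A + nat) : Prop :=
  forall t' t : nat, consec psi t' t ->
    psi t <> psi t' /\
    match psi t with
    | inl _ => True
    | inr m => (m < t')%nat
    end.

(* nf k j = n_j for j <= k (with junk n_0 = 0); n_1 = 0,
   n_(i+1) = 2 n_i - n_(psi i) or 2 n_i + 1. *)
Fixpoint nf {A : Type} (psi : nat -> A + nat) (k : nat) : nat -> R :=
  match k with
  | O => fun _ => 0
  | S k' =>
      let f := nf psi k' in
      fun j =>
        if (j <=? k')%nat then f j
        else match k' with
             | O => 0
             | _ => match psi k' with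
                    | inl _ => 2 * f k' + 1
                    | inr m => 2 * f k' - f m
                    end
             end
  end.

Definition nval {A : Type} (psi : nat -> A + nat) (i : nat) : R := nf psi i i.

(* delta(psi) = limsup_i n_(i+1)/n_i  (finitely many junk terms do not matter) *)
Definition delta {A : Type} (psi : nat -> A + nat) : Rbar :=
  LimSup_seq (fun i => nval psi (S i) / nval psi i).

(* The increments gap j = n_(j+1) - n_j are nondecreasing and at least 1, and
   constant between consecutive t's.  Once n_(i+1) < sqrt 3 n_i, psi takes only
   integer values, and the quantity defect t = n_(t-1) - gap t is nonincreasing
   along (t_k), dropping by at least 1 whenever psi(t_k) <> t_(k-1) - 1.  With
   infinitely many such k it would therefore become nonpositive; but at such a
   k, the ratio bound at t_k and at t_(k-1) (or at t_(k-1) - 1 when that point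
   also belongs to the family), together with defect <= 0, gives linear
   inequalities over Q(sqrt 3) that have no solution. *)

From Stdlib Require Import Reals Arith Lia Lra Psatz Classical.
From Coquelicot Require Import Coquelicot.
Open Scope R_scope.

Lemma LimSup_seq_lt_eventually (u : nat -> R) (c : R) :
  Rbar_lt (LimSup_seq u) c -> exists N, forall i, (N <= i)%nat -> u i < c.
Proof.
  intros Hlt.
  pose proof (proj2_sig (ex_LimSup_seq u)) as Hu.
  change (is_LimSup_seq u (LimSup_seq u)) in Hu.
  destruct (LimSup_seq u) as [l| |]; simpl in Hlt.
  - assert (Heps : 0 < c - l) by lra.
    destruct (Hu (mkposreal _ Heps)) as [_ [N HN]].
    exists N. intros i Hi. specialize (HN i Hi). simpl in HN. lra.
  - contradiction.
  - exact (Hu c).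
Qed.

Lemma nondecr_le (u : nat -> R) (a b : nat) :
  (forall j, (a <= j < b)%nat -> u j <= u (S j)) -> (a <= b)%nat -> u a <= u b.
Proof.
  intros Hu Hab. induction b as [|b IH].
  - replace a with 0%nat by lia. lra.
  - destruct (Nat.eq_dec a (S b)) as [->|Hne]; [lra|].
    assert (IH' := IH ltac:(intros; apply Hu; lia) ltac:(lia)).
    specialize (Hu b ltac:(lia)). lra.
Qed.

Lemma max_below (P : nat -> Prop) (a b : nat) :
  P a -> (a < b)%nat ->
  exists c, (a <= c < b)%nat /\ P c /\ forall u, (c < u < b)%nat -> ~ P u.
Proof.
  intros Ha Hab. induction b as [|b IH]; [lia|].
  destruct (Nat.eq_dec a b) as [<-|Hne].
  { exists a. repeat split; auto; lia. }
  destruct (classic (P b)) as [Hb|Hb].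
  - exists b. repeat split; auto; lia.
  - destruct (IH ltac:(lia)) as [c [Hc [Pc Hmax]]].
    exists c. repeat split; auto; try lia.
    intros u Hu. destruct (Nat.eq_dec u b) as [->|]; auto. apply Hmax. lia.
Qed.

Section Recurrence.

Context {A : Type} (psi : nat -> A + nat).
Hypothesis psi_fun : is_function psi.

Local Notation n := (nval psi).

Lemma nf_S k j :
  nf psi (S k) j =
  if (j <=? k)%nat then nf psi k j
  else match k with
       | O => 0
       | S _ => match psi k with
                | inl _ => 2 * nf psi k k + 1
                | inr m => 2 * nf psi k k - nf psi k m
                end
       end.
Proof. reflexivity. Qed.

Lemma nf_nval k j : (j <= k)%nat -> nf psi k j = n j.
Proof.
  induction k as [|k IH]; intros Hj.
  - replace j with 0%nat by lia. reflexivity.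
  - destruct (Nat.eq_dec j (S k)) as [->|Hne]; [reflexivity|].
    rewrite nf_S, (proj2 (Nat.leb_le j k)) by lia. apply IH. lia.
Qed.

Lemma psi_index_range i m : (1 <= i)%nat -> psi i = inr m -> (1 <= m <= i - 1)%nat.
Proof. intros Hi Hm. pose proof (psi_fun i Hi) as Hrange. now rewrite Hm in Hrange. Qed.

Lemma nval_S_letter i a : (1 <= i)%nat -> psi i = inl a -> n (S i) = 2 * n i + 1.
Proof.
  intros Hi Ha. unfold nval at 1. rewrite nf_S, (proj2 (Nat.leb_gt (S i) i)) by lia.
  destruct i as [|i]; [lia|]. now rewrite Ha.
Qed.

Lemma nval_S_index i m : (1 <= i)%nat -> psi i = inr m -> n (S i) = 2 * n i - n m.
Proof.
  intros Hi Hm. pose proof (psi_index_range i m Hi Hm).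
  unfold nval at 1. rewrite nf_S, (proj2 (Nat.leb_gt (S i) i)) by lia.
  destruct i as [|i]; [lia|]. now rewrite Hm, (nf_nval (S i) m) by lia.
Qed.

Lemma psi_1_letter : exists a, psi 1 = inl a.
Proof.
  destruct (psi 1%nat) as [a|m] eqn:E; [now exists a|].
  pose proof (psi_index_range 1 m (le_n 1) E). lia.
Qed.

Lemma inT_1 : inT psi 1.
Proof. destruct psi_1_letter as [a Ha]. split; [lia|]. now rewrite Ha. Qed.

Lemma psi_notinT j : (1 <= j)%nat -> ~ inT psi j -> psi j = inr (j - 1)%nat.
Proof.
  intros Hj Hnot. destruct (psi j) as [a|m] eqn:E.
  - exfalso. apply Hnot. split; [lia|]. now rewrite E.
  - pose proof (psi_index_range j m Hj E). f_equal.
    destruct (Nat.le_gt_cases m (j - 2)); [|lia].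
    exfalso. apply Hnot. split; [lia|]. rewrite E. lia.
Qed.

Definition gap j := n (S j) - n j.

(* n_0 is the junk value 0, so gap 0 = 0 starts the monotonicity of gap at
   index 0. *)
Lemma gap_0 : gap 0 = 0.
Proof. unfold gap, nval. simpl. lra. Qed.

Lemma gap_1 : gap 1 = 1.
Proof.
  destruct psi_1_letter as [a Ha]. unfold gap.
  rewrite (nval_S_letter 1 a) by (auto; lia). unfold nval. simpl. lra.
Qed.

Lemma gap_le_S i : gap i <= gap (S i).
Proof.
  induction i as [i IH] using lt_wf_ind.
  assert (gap_nonneg : forall j, (j <= i)%nat -> 0 <= gap j).
  { intros j Hj. rewrite <- gap_0. apply nondecr_le; [|lia].
    intros k Hk. apply IH. lia. }
  assert (n_le : forall m, (m <= i)%nat -> n m <= n i).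
  { intros m Hm. apply nondecr_le; [|lia].
    intros j Hj. pose proof (gap_nonneg j ltac:(lia)). unfold gap in *. lra. }
  unfold gap. destruct (psi (S i)) as [a|m] eqn:E.
  - rewrite (nval_S_letter (S i) a) by (auto; lia).
    pose proof (n_le 0%nat ltac:(lia)) as Hn0. change (n 0) with 0 in Hn0. lra.
  - pose proof (psi_index_range (S i) m ltac:(lia) E).
    rewrite (nval_S_index (S i) m) by (auto; lia).
    pose proof (n_le m ltac:(lia)). lra.
Qed.

Lemma gap_nonneg j : 0 <= gap j.
Proof. rewrite <- gap_0. apply nondecr_le; [intros; apply gap_le_S | lia]. Qed.

Lemma gap_ge_1 j : (1 <= j)%nat -> 1 <= gap j.
Proof. intros Hj. rewrite <- gap_1. apply nondecr_le; [intros; apply gap_le_S | lia]. Qed.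

Lemma nval_le a b : (a <= b)%nat -> n a <= n b.
Proof.
  apply nondecr_le. intros j _. pose proof (gap_nonneg j). unfold gap in *. lra.
Qed.

Lemma gap_pred_of_notinT j : (1 <= j)%nat -> ~ inT psi j -> gap j = gap (j - 1).
Proof.
  intros Hj Hnot. unfold gap.
  rewrite (nval_S_index j (j - 1)) by auto using psi_notinT.
  replace (S (j - 1)) with j by lia. lra.
Qed.

Lemma gap_run t' t j : consec psi t' t -> (t' <= j < t)%nat -> gap j = gap t'.
Proof.
  intros [[Ht' _] [_ [_ Hno]]]. induction j as [|j IH]; intros Hj.
  - now replace t' with 0%nat by lia.
  - destruct (Nat.eq_dec t' (S j)) as [->|Hne]; [reflexivity|].
    rewrite gap_pred_of_notinT by (try apply Hno; lia).
    replace (S j - 1)%nat with j by lia. apply IH. lia.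
Qed.

Lemma nval_ge_1 i : (2 <= i)%nat -> 1 <= n i.
Proof.
  intros Hi. pose proof (nval_le 2 i Hi). pose proof gap_1 as Hgap1.
  unfold gap in Hgap1. change (n 1) with 0 in Hgap1. lra.
Qed.

Definition defect t := n (t - 1) - gap t.

Lemma nval_decomp t : (1 <= t)%nat -> n t = defect t + gap (t - 1) + gap t.
Proof. intros Ht. unfold defect, gap. replace (S (t - 1)) with t by lia. lra. Qed.

Lemma gap_lt_of_ratio s t :
  (1 <= t)%nat -> n (S t) < s * n t ->
  gap t < (s - 1) * (defect t + gap (t - 1) + gap t).
Proof. intros Ht Hr. rewrite <- nval_decomp by exact Ht. unfold gap. lra. Qed.

Lemma consec_lt t' t : consec psi t' t -> (1 <= t' < t)%nat.
Proof. intros [[Ht' _] [_ [Hlt _]]]. lia. Qed.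

Lemma defect_step t' t m :
  consec psi t' t -> psi t = inr m -> defect t = defect t' - (n (t' - 1) - n m).
Proof.
  intros Hc Hm. pose proof (consec_lt t' t Hc).
  pose proof (gap_run t' t (t - 1) Hc ltac:(lia)) as Hrun.
  unfold defect, gap in *. rewrite (nval_S_index t m) in * by (auto; lia).
  replace (S (t - 1)) with t in Hrun by lia. lra.
Qed.

Lemma consec_le t' t u : consec psi t' t -> inT psi u -> (u < t)%nat -> (u <= t')%nat.
Proof.
  intros [_ [_ [_ Hno]]] Hu Hlt. destruct (Nat.le_gt_cases u t'); auto.
  exfalso. apply (Hno u); auto.
Qed.

Lemma consec_S u : inT psi u -> inT psi (S u) -> consec psi u (S u).
Proof. intros Hu HSu. split; [exact Hu | split; [exact HSu | split; [lia | intros v Hv; lia]]]. Qed.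

Lemma consec_exists t : inT psi t -> (1 < t)%nat -> exists t', consec psi t' t.
Proof.
  intros Ht H1. destruct (max_below (inT psi) 1 t inT_1 H1) as [t' [Hrange [Ht' Hmax]]].
  exists t'. split; [exact Ht' | split; [exact Ht | split; [lia | exact Hmax]]].
Qed.

End Recurrence.

Section Sqrt3.

Variable s : R.
Hypothesis s_sq : s * s = 3.
Hypothesis s_pos : 0 < s.

Lemma sqrt3_range : 5 / 3 < s < 2.
Proof.
  split; apply Rnot_le_lt; intros H.
  - assert (s * s <= 5 / 3 * (5 / 3)) by (apply Rmult_le_compat; lra). lra.
  - assert (2 * 2 <= s * s) by (apply Rmult_le_compat; lra). lra.
Qed.

Lemma sqrt3_ineq_run G D E dl :
  (2 - s) * E + dl < (s - 1) * G + (2 * s - 3) * D ->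
  E <= dl -> D < (s - 1) * (G + E + D) -> G <= 0 -> False.
Proof.
  intros Hkey HE HD HG.
  assert (HsD : s * D < (3 - s) * (G + E + D)).
  { replace (3 - s) with (s * (s - 1)) by (rewrite <- s_sq; ring).
    rewrite Rmult_assoc. now apply Rmult_lt_compat_l. }
  lra.
Qed.

Lemma sqrt3_ineq_jump G D E F d dl :
  (2 - s) * E + dl < (s - 1) * (G - d) + (2 * s - 3) * D ->
  D = E + F + d -> F <= dl -> 0 <= d -> E < (s - 1) * (G + F + E) -> G <= 0 -> False.
Proof.
  intros Hkey HD HF Hd HE HG. subst D. pose proof sqrt3_range.
  assert (HsE : (s - 1) * E < (4 - 2 * s) * (G + F + E)).
  { replace (4 - 2 * s) with ((s - 1) * (s - 1)) by nra.
    rewrite Rmult_assoc. apply Rmult_lt_compat_l; lra. }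
  nra.
Qed.

End Sqrt3.

Section Tail.

Context {A : Type} (psi : nat -> A + nat).
Hypothesis psi_fun : is_function psi.
Hypothesis psi_red : reduced psi.

Variable s : R.
Hypothesis s_sq : s * s = 3.
Hypothesis s_pos : 0 < s.

Variable N0 : nat.
Hypothesis N0_ge_3 : (3 <= N0)%nat.
Hypothesis ratio_tail : forall i, (N0 <= i)%nat -> nval psi (S i) < s * nval psi i.

Local Notation n := (nval psi).
Local Notation gap := (gap psi).
Local Notation defect := (defect psi).

Lemma psi_tail_index i : (N0 <= i)%nat -> exists m, psi i = inr m.
Proof.
  intros Hi. destruct (psi i) as [a|m] eqn:E; [exfalso | now exists m].
  pose proof (ratio_tail i Hi) as Hr.
  rewrite (nval_S_letter psi i a) in Hr by (auto; lia).
  pose proof (nval_ge_1 psi psi_fun i ltac:(lia)). pose proof (sqrt3_range s s_sq s_pos). nra.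
Qed.

Lemma reduced_index t' t m : consec psi t' t -> psi t = inr m -> (m < t')%nat.
Proof. intros Hc Hm. destruct (psi_red t' t Hc) as [_ Hr]. now rewrite Hm in Hr. Qed.

Lemma defect_le t' t : consec psi t' t -> (N0 <= t)%nat -> defect t <= defect t'.
Proof.
  intros Hc Ht. destruct (psi_tail_index t Ht) as [m Hm].
  pose proof (reduced_index t' t m Hc Hm).
  rewrite (defect_step psi psi_fun t' t m Hc Hm).
  pose proof (nval_le psi psi_fun m (t' - 1) ltac:(lia)). lra.
Qed.

Lemma defect_drop t' t :
  consec psi t' t -> (N0 <= t')%nat -> psi t <> inr (t' - 1)%nat -> defect t <= defect t' - 1.
Proof.
  intros Hc Ht' Hne. pose proof (consec_lt psi t' t Hc).
  destruct (psi_tail_index t ltac:(lia)) as [m Hm].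
  assert (m <> (t' - 1)%nat) by congruence.
  pose proof (reduced_index t' t m Hc Hm).
  rewrite (defect_step psi psi_fun t' t m Hc Hm).
  pose proof (nval_le psi psi_fun m (t' - 2) ltac:(lia)).
  pose proof (gap_ge_1 psi psi_fun (t' - 2) ltac:(lia)). unfold gap in *.
  replace (S (t' - 2)) with (t' - 1)%nat in * by lia. lra.
Qed.

Lemma defect_antitone u t :
  inT psi u -> inT psi t -> (N0 <= u <= t)%nat -> defect t <= defect u.
Proof.
  induction t as [t IH] using lt_wf_ind. intros Hu Ht Hut.
  destruct (Nat.eq_dec u t) as [<-|Hne]; [lra|].
  destruct (consec_exists psi psi_fun t Ht ltac:(lia)) as [t' Hc].
  pose proof (consec_lt psi t' t Hc).
  pose proof (consec_le psi t' t u Hc Hu ltac:(lia)).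
  pose proof (defect_le t' t Hc ltac:(lia)).
  pose proof (IH t' ltac:(lia) Hu (proj1 Hc) ltac:(lia)). lra.
Qed.

Lemma violation_key_bound t1 t m :
  consec psi t1 t -> (N0 <= t)%nat -> psi t = inr m ->
  (2 - s) * gap (t1 - 1) + (n (t1 - 1) - n m) < (s - 1) * defect t1 + (2 * s - 3) * gap t1.
Proof.
  intros Hc Ht Hm. pose proof (consec_lt psi t1 t Hc). pose proof (sqrt3_range s s_sq s_pos).
  pose proof (gap_lt_of_ratio psi s t ltac:(lia) (ratio_tail t Ht)) as Hr.
  rewrite (defect_step psi psi_fun t1 t m Hc Hm),
    (gap_run psi psi_fun t1 t (t - 1) Hc ltac:(lia)) in Hr.
  assert (Hgap : gap t1 + gap (t1 - 1) + (n (t1 - 1) - n m) <= gap t).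
  { pose proof (nval_le psi psi_fun (S t1) t ltac:(lia)).
    unfold gap. rewrite (nval_S_index psi psi_fun t m) by (auto; lia).
    replace (S (t1 - 1)) with t1 by lia. lra. }
  nra.
Qed.

Lemma violation_absurd_run u t m :
  ~ inT psi u -> consec psi (S u) t -> (N0 <= u)%nat -> psi t = inr m ->
  (m <= u - 1)%nat -> defect (S u) <= 0 -> False.
Proof.
  intros Hnot Hc Hu Hm Hmle HG. pose proof (consec_lt psi (S u) t Hc).
  pose proof (violation_key_bound (S u) t m Hc ltac:(lia) Hm) as Hkey.
  replace (S u - 1)%nat with u in Hkey by lia.
  pose proof (gap_pred_of_notinT psi psi_fun u ltac:(lia) Hnot) as Hflat.
  apply (sqrt3_ineq_run s s_sq s_pos (defect (S u)) (gap (S u)) (gap u) (n u - n m)); auto.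
  - pose proof (nval_le psi psi_fun m (u - 1) Hmle). rewrite Hflat. unfold gap.
    replace (S (u - 1)) with u by lia. lra.
  - replace (gap u) with (gap (S u - 1)) by (f_equal; lia).
    apply gap_lt_of_ratio; auto; lia.
Qed.

Lemma violation_absurd_jump u t m :
  consec psi u (S u) -> consec psi (S u) t -> (N0 <= u)%nat -> psi t = inr m ->
  (m <= u - 1)%nat -> defect u <= 0 -> False.
Proof.
  intros Hc1 Hc Hu Hm Hmle HG. pose proof (consec_lt psi (S u) t Hc).
  pose proof (violation_key_bound (S u) t m Hc ltac:(lia) Hm) as Hkey.
  replace (S u - 1)%nat with u in Hkey by lia.
  destruct (psi_tail_index (S u) ltac:(lia)) as [m1 Hm1].
  pose proof (reduced_index u (S u) m1 Hc1 Hm1).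
  rewrite (defect_step psi psi_fun u (S u) m1 Hc1 Hm1) in Hkey.
  apply (sqrt3_ineq_jump s s_sq s_pos (defect u) (gap (S u)) (gap u) (gap (u - 1))
           (n (u - 1) - n m1) (n u - n m)); auto.
  - unfold gap. rewrite (nval_S_index psi psi_fun (S u) m1) by (auto; lia).
    replace (S (u - 1)) with u by lia. lra.
  - pose proof (nval_le psi psi_fun m (u - 1) Hmle). unfold gap.
    replace (S (u - 1)) with u by lia. lra.
  - pose proof (nval_le psi psi_fun m1 (u - 1) ltac:(lia)). lra.
  - apply gap_lt_of_ratio; auto; lia.
Qed.

Lemma no_violation_beyond ts t1 t :
  inT psi ts -> (N0 <= ts < t1)%nat -> defect ts <= 0 -> consec psi t1 t ->
  psi t = inr (t1 - 1)%nat.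
Proof.
  intros Hts Hrange Hdef Hc. apply NNPP. intros Hne.
  pose proof (consec_lt psi t1 t Hc).
  destruct (psi_tail_index t ltac:(lia)) as [m Hm].
  pose proof (reduced_index t1 t m Hc Hm).
  assert (m <> (t1 - 1)%nat) by congruence.
  destruct t1 as [|u]; [lia|]. replace (S u - 1)%nat with u in * by lia.
  destruct (classic (inT psi u)) as [Hin|Hnot].
  - pose proof (defect_antitone ts u Hts Hin ltac:(lia)).
    apply (violation_absurd_jump u t m (consec_S psi u Hin (proj1 Hc)) Hc ltac:(lia) Hm);
      (lia || lra).
  - pose proof (defect_antitone ts (S u) Hts (proj1 Hc) ltac:(lia)).
    apply (violation_absurd_run u t m Hnot Hc ltac:(lia) Hm); (lia || lra).
Qed.

Lemma defect_eventually_nonpos :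
  (forall N, exists t' t, consec psi t' t /\ (N <= t')%nat /\ psi t <> inr (t' - 1)%nat) ->
  exists ts, inT psi ts /\ (N0 <= ts)%nat /\ defect ts <= 0.
Proof.
  intros Hv. destruct (Hv N0) as [u0' [u0 [Hc0 [Hu0' _]]]].
  pose proof (consec_lt psi u0' u0 Hc0).
  assert (Hdown : forall c : nat,
             exists u, inT psi u /\ (u0 <= u)%nat /\ defect u <= defect u0 - INR c).
  { induction c as [|c [u [Hu [Hu0 Hdu]]]].
    - exists u0. split; [exact (proj1 (proj2 Hc0))|]. split; [lia|]. simpl. lra.
    - destruct (Hv u) as [t' [t [Hc [Ht' Hne]]]].
      pose proof (consec_lt psi t' t Hc).
      pose proof (defect_drop t' t Hc ltac:(lia) Hne).
      pose proof (defect_antitone u t' Hu (proj1 Hc) ltac:(lia)).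
      exists t. split; [exact (proj1 (proj2 Hc))|]. split; [lia|].
      rewrite S_INR. lra. }
  destruct (INR_unbounded (defect u0)) as [c Hc].
  destruct (Hdown c) as [u [Hu [Hu0 Hdu]]].
  exists u. split; [exact Hu|]. split; [lia|lra].
Qed.

Lemma eventually_no_violation :
  exists N, forall t' t, consec psi t' t -> (N <= t')%nat -> psi t = inr (t' - 1)%nat.
Proof.
  apply NNPP. intros Hnot.
  assert (Hv : forall N, exists t' t,
             consec psi t' t /\ (N <= t')%nat /\ psi t <> inr (t' - 1)%nat).
  { intros N. apply NNPP. intros Hno. apply Hnot. exists N.
    intros t' t Hc Ht'. apply NNPP. intros Hne. apply Hno. now exists t', t. }
  destruct (defect_eventually_nonpos Hv) as [ts [Hts [HN0 Hdef]]].
  apply Hnot. exists (S ts). intros t' t Hc Ht'.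
  apply (no_violation_beyond ts); auto; lia.
Qed.

End Tail.

Theorem lemma7p1 (A : Type) (psi : nat -> A + nat)
  (Hfun : is_function psi) (Hred : reduced psi)
  (Hdelta : Rbar_lt (delta psi) (Finite (sqrt 3))) :
  (exists N : nat, forall t : nat, inT psi t -> (t <= N)%nat) \/
  (exists N : nat, forall t' t : nat, consec psi t' t -> (N <= t')%nat ->
     psi t = inr (t' - 1)%nat).
Proof.
  (* The second alternative also covers a finite family, vacuously. *)
  right.
  destruct (LimSup_seq_lt_eventually _ _ Hdelta) as [N HN].
  apply (eventually_no_violation psi Hfun Hred (sqrt 3) (sqrt_sqrt 3 ltac:(lra))
           ltac:(apply sqrt_lt_R0; lra) (Nat.max N 3)); [lia|].
  intros i Hi.
  apply Rlt_div_l.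
  - pose proof (nval_ge_1 psi Hfun i ltac:(lia)). lra.
  - apply HN. lia.
Qed.
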